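(* Let $p$ be a prime, $\varepsilon>0$, $m=\lceil\log p-2\log\varepsilon\rceil$, $d=2^m$, and let $t_0\in\mathbb{Z}_p$ and $T=\{t_1,\ldots,t_m\}\subset\mathbb{Z}_p$ be such that the $3^m$ elements $2t_0+n_1t_1+\cdots+n_mt_m$ ($n_i\in\{0,1,2\}$) of $\mathbb{Z}_p$ are pairwise distinct. For $j=(j_1,\ldots,j_m)\in\{0,1\}^m$ let $k_j=t_0+\sum_{i:\,j_i=1}t_i \bmod p$, so that $A=\{k_j\}$. Define the unitary $U_a(A)$ on $m+1$ qubits by \[ U_a(A)\,|j\rangle|0\rangle=|j\rangle\Big(\cos\tfrac{2\pi k_j}{p}|0\rangle+\sin\tfrac{2\pi k_j}{p}|1\rangle\Big),\qquad U_a(A)\,|j\rangle|1\rangle=|j\rangle\Big(-\sin\tfrac{2\pi k_j}{p}|0\rangle+\cos\tfrac{2\pi k_j}{p}|1\rangle\Big). \] Then $U_a(A)$ can be computed by a quantum circuit of depth $\lceil\log p-2\log\varepsilon\rceil$.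
   Context: $\log$ denotes the logarithm base $2$. Circuits are built from one- and two-qubit gates; the depth is the number of layers of gates acting on disjoint qubits. $U_a(A)$ is the transition operator of the quantum finite automaton for $MOD_p=\{a^i : p\mid i\}$ with coefficient set $A$, with basis state $|q_{j,b}\rangle$ identified with $|j\rangle|b\rangle$. *)

From HB Require Import structures.
From mathcomp Require Import all_boot all_order all_algebra.
From mathcomp Require Import complex.
From Stdlib Require List.
From mathcomp Require Import reals exp trigo.
Set Implicit Arguments.
Unset Strict Implicit.
Unset Printing Implicit Defensive.
Import Order.TTheory GRing.Theory Num.Theory.
Local Open Scope ring_scope.
Local Open Scope complex_scope.

Section Quantum.
Variable R : realType.
Local Notation C := R[i].

Definition log2 (x : R) : R := ln x / ln 2.

Definition basis (n : nat) := {ffun 'I_n -> bool}.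

(* operators on n qubits, as matrices indexed by basis states:
   op x y = <x| op |y> *)
Definition op (n : nat) := basis n -> basis n -> C.

Definition op_id n : op n := fun x y => (x == y)%:R.
Definition op_mul n (A B : op n) : op n :=
  fun x y => \sum_(z : basis n) A x z * B z y.

Definition unitary_gate (T : finType) (u : T -> T -> C) : Prop :=
  forall x y : T, \sum_(z : T) (u z x)^* * u z y = (x == y)%:R.

Inductive gate (n : nat) :=
| Gate1 of 'I_n & (bool -> bool -> C)
| Gate2 of 'I_n & 'I_n & (bool * bool -> bool * bool -> C).

Definition gate_support n (g : gate n) : seq 'I_n :=
  match g with Gate1 q _ => [:: q] | Gate2 q1 q2 _ => [:: q1; q2] end.

Definition gate_wf n (g : gate n) : Prop :=
  match g with
  | Gate1 _ u => unitary_gate u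
  | Gate2 q1 q2 u => q1 != q2 /\ unitary_gate u
  end.

Definition gate_op n (g : gate n) : op n :=
  fun x y =>
    match g with
    | Gate1 q u => u (x q) (y q) *
        ([forall r : 'I_n, (r != q) ==> (x r == y r)])%:R
    | Gate2 q1 q2 u => u (x q1, x q2) (y q1, y q2) *
        ([forall r : 'I_n, ((r != q1) && (r != q2)) ==> (x r == y r)])%:R
    end.

Definition layer n := seq (gate n).

Definition layer_wf n (L : layer n) : Prop :=
  List.Forall (@gate_wf n) L /\ uniq (flatten (map (@gate_support n) L)).

Definition layer_op n (L : layer n) : op n :=
  foldr (fun g acc => op_mul (gate_op g) acc) (@op_id n) L.

(* a circuit: a sequence of layers, the first one applied first *)
Definition circuit n := seq (layer n).

Definition circuit_wf n (c : circuit n) : Prop :=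
  List.Forall (@layer_wf n) c.

Definition circuit_op n (c : circuit n) : op n :=
  foldl (fun acc L => op_mul (layer_op L) acc) (@op_id n) c.

Definition depth n (c : circuit n) : nat := size c.

Definition computable_in_depth n (U : op n) (D : nat) : Prop :=
  exists c : circuit n,
    [/\ circuit_wf c, depth c = D & forall x y, circuit_op c x y = U x y].

Definition kj (p m : nat) (t0 : 'Z_p) (t : 'I_m -> 'Z_p) (j : 'I_m -> bool)
  : 'Z_p := t0 + \sum_(i < m | j i) t i.

(* the transition operator U_a(A) on m+1 qubits: qubits widen_ord i (i < m)
   hold |j>, qubit ord_max is the last qubit |b>. *)
Definition Ua (p m : nat) (t0 : 'Z_p) (t : 'I_m -> 'Z_p) : op m.+1 :=
  fun x y =>
    let j := fun i : 'I_m => y (widen_ord (leqnSn m) i) in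
    let th := 2 * pi * (nat_of_ord (kj t0 t j))%:R / p%:R in
    let c := (cos th)%:C in
    let s := (sin th)%:C in
    ([forall i : 'I_m, x (widen_ord (leqnSn m) i) == j i])%:R *
    match y ord_max, x ord_max with
    | false, false => c     (* <0|U|0> *)
    | false, true  => s     (* <1|U|0> *)
    | true,  false => - s   (* <0|U|1> *)
    | true,  true  => c     (* <1|U|1> *)
    end.

End Quantum.

From mathcomp Require Import all_boot all_order all_algebra.
From mathcomp Require Import complex.
From mathcomp Require Import reals trigo.
From mathcomp Require Import boolp ring.
Import Order.TTheory GRing.Theory Num.Theory.
Local Open Scope ring_scope.
Set Implicit Arguments.
Unset Strict Implicit.
Unset Printing Implicit Defensive.

(* U_a(A) is block diagonal: on |j>|b> it rotates the last qubit by the angle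
   2 pi k_j / p.  Rotations of one qubit compose by adding angles, and angles
   only matter modulo 2 pi, so the reduction modulo p in k_j is invisible and
   the angle splits as 2 pi t_0 / p plus the sum of 2 pi t_i / p over the set
   bits j_i.  Hence U_a(A) is the product of the m two-qubit gates "if qubit i
   is set, rotate the last qubit by 2 pi t_i / p", one per layer, with the
   unconditional rotation by 2 pi t_0 / p merged into the first of them. *)

Section Rotations.
Variable R : realType.
Local Open Scope complex_scope.
Local Notation C := R[i].

(* The entry <a| R(th) |b> of the rotation by th, with the index order of [Ua]. *)
Definition rotation (th : R) (a b : bool) : C :=
  match b, a with
  | false, false => (cos th)%:C
  | false, true => (sin th)%:C
  | true, false => (- sin th)%:C
  | true, true => (cos th)%:C
  end.

Lemma rotationD th th' a b :
  \sum_(c : bool) rotation th a c * rotation th' c b = rotation (th + th') a b.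
Proof.
rewrite big_bool; case: a; case: b => /=;
by rewrite -!rmorphM -rmorphD ?cosD ?sinD; congr (_ %:C); ring.
Qed.

Lemma rotation0 a b : rotation 0 a b = (a == b)%:R.
Proof. by rewrite /rotation cos0 sin0 oppr0; case: a; case: b. Qed.

Lemma conj_rotation th a b : (rotation th a b)^*%R = rotation (- th) b a.
Proof. by rewrite /rotation cosN sinN opprK; case: a; case: b; exact: conjc_real. Qed.

Lemma rotation_orthogonal th a b :
  \sum_(c : bool) (rotation th c a)^* * rotation th c b = (a == b)%:R.
Proof.
under eq_bigr => c _ do rewrite conj_rotation.
by rewrite rotationD addNr rotation0.
Qed.

Lemma rotationDn2pi th n : rotation (th + pi *+ 2 *+ n) = rotation th.
Proof. by rewrite /rotation (periodicn (@cosD2pi R)) (periodicn (@sinD2pi R)). Qed.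

End Rotations.

Section ControlledRotations.
Variables (R : realType) (m : nat).
Local Open Scope complex_scope.
Local Notation C := R[i].
Local Notation w := (widen_ord (leqnSn m)).
Local Notation target := (@ord_max m).

Definition ctrl (y : basis m.+1) : 'I_m -> bool := fun k => y (w k).

Definition ctrl_rot (phi : ('I_m -> bool) -> R) : op R m.+1 := fun x y =>
  [forall k, x (w k) == ctrl y k]%:R * rotation (phi (ctrl y)) (x target) (y target).

Definition set_target (y : basis m.+1) (b : bool) : basis m.+1 :=
  [ffun r => if r == target then b else y r].

Lemma widen_ord_neq_max (k : 'I_m) : (w k == target) = false.
Proof. by apply/negbTE; rewrite -val_eqE /= neq_ltn ltn_ord. Qed.

Lemma ctrl_set_target y b : ctrl (set_target y b) = ctrl y.
Proof. by apply/funext => k; rewrite /ctrl ffunE widen_ord_neq_max. Qed.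

Lemma set_target_target y b : set_target y b target = b.
Proof. by rewrite ffunE eqxx. Qed.

Lemma eq_basis_ctrl (x y : basis m.+1) :
  (x == y) = [forall k, x (w k) == ctrl y k] && (x target == y target).
Proof.
apply/eqP/andP => [-> | [/forallP same_ctrl /eqP same_target]].
  by split; [apply/forallP => k | ].
apply/ffunP => r; case: (unliftP target r) => [k -> | -> //].
have -> : lift target k = w k by apply: val_inj; exact: lift_max.
exact/eqP/same_ctrl.
Qed.

Lemma same_ctrlE (z y : basis m.+1) :
  [forall k, z (w k) == ctrl y k]%:R = \sum_(b : bool) (z == set_target y b)%:R :> C.
Proof.
under eq_bigr => b _ do rewrite eq_basis_ctrl ctrl_set_target set_target_target.
case: [forall k, _]; last by rewrite big1.
by rewrite big_bool /=; case: (z target); rewrite ?addr0 ?add0r.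
Qed.

Lemma sum_same_ctrl (G : basis m.+1 -> C) y :
  \sum_(z : basis m.+1) [forall k, z (w k) == ctrl y k]%:R * G z =
  \sum_(b : bool) G (set_target y b).
Proof.
under eq_bigr => z _ do rewrite same_ctrlE big_distrl /=.
rewrite exchange_big /=; apply: eq_bigr => b _.
rewrite (bigD1 (set_target y b)) //= eqxx mul1r big1 ?addr0 // => z /negbTE ->.
by rewrite mul0r.
Qed.

Lemma ctrl_rotM phi psi :
  op_mul (ctrl_rot phi) (ctrl_rot psi) = ctrl_rot (fun j => phi j + psi j).
Proof.
apply/funext => x; apply/funext => y; rewrite /op_mul /ctrl_rot.
under eq_bigr => z _ do rewrite mulrCA.
rewrite sum_same_ctrl.
under eq_bigr => b _ do rewrite ctrl_set_target set_target_target -mulrA.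
by rewrite -big_distrr /= rotationD.
Qed.

Lemma ctrl_rot0 : ctrl_rot (fun _ => 0) = @op_id R m.+1.
Proof.
apply/funext => x; apply/funext => y.
by rewrite /ctrl_rot /op_id rotation0 eq_basis_ctrl -mulnb natrM.
Qed.

Lemma ctrl_rotDn2pi phi (n : ('I_m -> bool) -> nat) :
  ctrl_rot (fun j => phi j + pi *+ 2 *+ n j) = ctrl_rot phi.
Proof. by apply/funext => x; apply/funext => y; rewrite /ctrl_rot rotationDn2pi. Qed.

Definition crot_gate (f : bool -> R) (a b : bool * bool) : C :=
  (a.1 == b.1)%:R * rotation (f b.1) a.2 b.2.

Lemma crot_gate_unitary f : unitary_gate (crot_gate f).
Proof.
move=> [x1 x2] [y1 y2]; rewrite -(pair_bigA _ (fun z1 z2 =>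
  (crot_gate f (z1, z2) (x1, x2))^*%R * crot_gate f (z1, z2) (y1, y2))) /=.
rewrite (bigD1 x1) //= [X in _ + X]big1 => [|z1 z1x1]; last first.
  by apply: big1 => z2 _; rewrite /crot_gate /= (negbTE z1x1) mul0r conjC0 mul0r.
rewrite addr0 /crot_gate /= eqxx xpair_eqE.
case: (eqVneq x1 y1) => [<-|x1y1] /=; last first.
  by rewrite big1 // => z2 _; rewrite mul0r mulr0.
under eq_bigr => z2 _ do rewrite !mul1r.
exact: rotation_orthogonal.
Qed.

Lemma gate_op_crot (i : 'I_m) f :
  gate_op (Gate2 (w i) target (crot_gate f)) = ctrl_rot (fun j => f (j i)).
Proof.
apply/funext => x; apply/funext => y; rewrite /gate_op /ctrl_rot /crot_gate /ctrl /=.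
have -> : [forall k, x (w k) == y (w k)] = (x (w i) == y (w i)) &&
    [forall r, (r != w i) && (r != target) ==> (x r == y r)].
  apply/forallP/andP => [same | [same_i /forallP same_rest] k].
    split=> //; apply/forallP => r; apply/implyP => /andP[_ r_target].
    case: (unliftP target r) r_target => [k -> _ | -> ]; last by rewrite eqxx.
    by have -> : lift target k = w k by apply: val_inj; exact: lift_max.
  case: (eqVneq (w k) (w i)) => [-> // | k_i].
  by apply: (implyP (same_rest (w k))); rewrite k_i widen_ord_neq_max.
by rewrite -mulnb natrM mulrAC.
Qed.

Definition crot_layer (F : 'I_m -> bool -> R) (i : 'I_m) : layer R m.+1 :=
  [:: Gate2 (w i) target (crot_gate (F i))].

Lemma crot_layer_wf F i : layer_wf (crot_layer F i).
Proof.
split; last by rewrite /= inE widen_ord_neq_max.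
by constructor; [split; [rewrite widen_ord_neq_max | exact: crot_gate_unitary] | ].
Qed.

Lemma op_mulr1 (A : op R m.+1) : op_mul A (@op_id R m.+1) = A.
Proof.
apply/funext => x; apply/funext => y; rewrite /op_mul /op_id.
by rewrite (bigD1 y) //= eqxx mulr1 big1 ?addr0 // => z /negbTE ->; rewrite mulr0.
Qed.

Lemma circuit_op_crot_layers F (s : seq 'I_m) :
  circuit_op [seq crot_layer F i | i <- s] =
  ctrl_rot (fun j => \sum_(i <- s) F i (j i)).
Proof.
rewrite /circuit_op -ctrl_rot0.
suff -> : forall phi, foldl (fun acc L => op_mul (layer_op L) acc) (ctrl_rot phi)
    [seq crot_layer F i | i <- s] = ctrl_rot (fun j => phi j + \sum_(i <- s) F i (j i)).
  by congr ctrl_rot; apply/funext => j; rewrite add0r.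
elim: s => [|i s IHs] phi /=.
  by congr ctrl_rot; apply/funext => j; rewrite big_nil addr0.
rewrite op_mulr1 gate_op_crot ctrl_rotM IHs; congr ctrl_rot; apply/funext => j.
by rewrite big_cons addrCA addrA.
Qed.

Lemma ctrl_rot_computable (F : 'I_m -> bool -> R) :
  computable_in_depth (ctrl_rot (fun j => \sum_(i < m) F i (j i))) m.
Proof.
exists [seq crot_layer F i | i <- enum 'I_m]; split.
- by elim: (enum 'I_m) => //= i s IHs; constructor; [exact: crot_layer_wf | ].
- by rewrite /depth size_map size_enum_ord.
- move=> x y; rewrite circuit_op_crot_layers; congr (ctrl_rot _ x y).
  by apply/funext => j; rewrite big_enum.
Qed.

End ControlledRotations.

Section Angles.
Variables (R : realType) (p : nat).

Definition angle (N : nat) : R := 2 * pi * N%:R / p%:R.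

Lemma angle0 : angle 0 = 0.
Proof. by rewrite /angle mulr0 mul0r. Qed.

Lemma angleD a b : angle (a + b) = angle a + angle b.
Proof. by rewrite /angle natrD mulrDr mulrDl. Qed.

Lemma angle_sum (I : finType) (P : pred I) (a : I -> nat) :
  angle (\sum_(i | P i) a i) = \sum_(i | P i) angle (a i).
Proof. by rewrite /angle natr_sum mulr_sumr mulr_suml. Qed.

Lemma angle_modn N : (0 < p)%N -> angle N = angle (N %% p) + pi *+ 2 *+ (N %/ p).
Proof.
move=> p_gt0; have p_neq0 : p%:R != 0 :> R by rewrite pnatr_eq0 -lt0n.
rewrite {1}(divn_eq N p) angleD addrC; congr (_ + _).
by rewrite /angle -mulrnA -[RHS]mulr_natr !natrM; field.
Qed.

End Angles.

(* For p <= 1 the type 'Z_p is Z/2Z, hence the hypothesis 1 < p. *)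
Lemma val_kj (p m : nat) (t0 : 'Z_p) (t : 'I_m -> 'Z_p) (j : 'I_m -> bool) :
  (1 < p)%N -> kj t0 t j = ((t0 + \sum_(i < m | j i) t i) %% p)%N :> nat.
Proof.
move=> p_gt1; rewrite -val_Zp_nat // natrD natr_sum /kj natr_Zp.
by congr (nat_of_ord (_ + _)); apply: eq_bigr => i _; rewrite natr_Zp.
Qed.

Lemma Ua_ctrl_rot (R : realType) (p m : nat) (t0 : 'Z_p) (t : 'I_m -> 'Z_p) :
  Ua R t0 t = ctrl_rot (fun j => angle R p (kj t0 t j)).
Proof.
apply/funext => x; apply/funext => y; rewrite /Ua /ctrl_rot /rotation /=.
by case: (x ord_max); case: (y ord_max); rewrite ?rmorphN.
Qed.

Lemma Ua_computable (R : realType) (p m : nat) (t0 : 'Z_p) (t : 'I_m -> 'Z_p) :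
  (1 < p)%N -> (0 < m)%N -> computable_in_depth (Ua R t0 t) m.
Proof.
move=> p_gt1 m_gt0; pose i0 := Ordinal m_gt0.
pose F i (b : bool) : R :=
  (if i == i0 then angle R p t0 else 0) + (if b then angle R p (t i) else 0).
pose N j := (t0 + \sum_(i < m | j i) t i)%N.
have sum_F j : \sum_(i < m) F i (j i) = angle R p (N j).
  by rewrite big_split /= -!big_mkcond big_pred1_eq angleD angle_sum.
suff -> : Ua R t0 t = ctrl_rot (fun j => \sum_(i < m) F i (j i)).
  exact: ctrl_rot_computable.
rewrite Ua_ctrl_rot -(ctrl_rotDn2pi _ (fun j => (N j %/ p)%N)).
congr ctrl_rot; apply/funext => j.
by rewrite sum_F val_kj // -angle_modn // ltnW.
Qed.

Theorem corollary1 (R : realType) (p : nat) (eps : R) (m : nat)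
    (t0 : 'Z_p) (t : 'I_m -> 'Z_p) :
  prime p -> 0 < eps ->
  (m%:Z = Num.ceil (log2 p%:R - 2 * log2 eps))%R ->
  (0 < m)%N ->
  injective (fun n : {ffun 'I_m -> 'I_3} =>
               t0 *+ 2 + \sum_(i < m) t i *+ (nat_of_ord (n i))) ->
  computable_in_depth (@Ua R p m t0 t) m.
Proof.
move=> p_prime _ _ m_gt0 _.
exact: Ua_computable (prime_gt1 p_prime) m_gt0.
Qed.
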